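(* Let $n\ge2$ and let $\mathfrak{g}_n$ be the Lie algebra defined in the context. The linear map $\rho:\mathfrak{g}_n\to\mathfrak{sl}_{2(n-1)}(\mathbb{K})$ sending $$x=ah+bx_++cx_-+\sum_{i=1}^{n-2}(d_iy_{i,+}+e_iy_{i,-})+\sum_{1\le i\le j\le n-2}m_{ij}z_{i,j}$$ to the $2(n-1)\times2(n-1)$ matrix $X$ whose rows $1,\dots,n-2$ are zero, whose row $n-1$ is $(d_1,\dots,d_{n-2},a,b,0,\dots,0)$, whose row $n$ is $(e_1,\dots,e_{n-2},c,-a,0,\dots,0)$, and whose row $n+i$ ($1\le i\le n-2$) is $(\mu_{i1},\dots,\mu_{i,n-2},-e_i,d_i,0,\dots,0)$, where $\mu$ is the symmetric $(n-2)\times(n-2)$ matrix with $\mu_{ii}=2m_{ii}$ and $\mu_{ij}=\mu_{ji}=m_{ij}$ for $i<j$, is a faithful representation of $\mathfrak{g}_n$. Equivalently, in terms of matrix units $E_{i,j}$: $\rho(x_+)=E_{n-1,n}$, $\rho(x_-)=E_{n,n-1}$, $\rho(h)=E_{n-1,n-1}-E_{n,n}$, $\rho(y_{i,+})=E_{n-1,i}+E_{n+i,n}$, $\rho(y_{i,-})=E_{n,i}-E_{n+i,n-1}$, $\rho(z_{i,j})=E_{i+n,j}+E_{j+n,i}$.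
   Context: $\mathbb{K}$ is $\mathbb{R}$ or $\mathbb{C}$. For $n\ge2$, $\mathfrak{g}_n$ is the Lie algebra with basis $h,x_-,x_+$, $y_{i,\pm}$ ($1\le i\le n-2$), $z_{i,j}$ ($1\le i\le j\le n-2$), with Lie bracket defined by the nonzero brackets (up to antisymmetry) $[x_+,x_-]=h$, $[h,x_\pm]=\pm2x_\pm$, $[h,y_{i,\pm}]=\pm y_{i,\pm}$, $[x_-,y_{i,+}]=y_{i,-}$, $[x_+,y_{i,-}]=y_{i,+}$, $[y_{i,+},y_{j,-}]=z_{\min(i,j),\max(i,j)}$, all other brackets of basis elements being zero. $E_{i,j}$ denotes the matrix whose only nonzero entry is a $1$ in position $(i,j)$. *)

From mathcomp Require Import all_boot all_order all_algebra.
From mathcomp Require Import Rstruct complex.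

Set Implicit Arguments.
Unset Strict Implicit.
Unset Printing Implicit Defensive.

Import GRing.Theory.
Local Open Scope ring_scope.

(** Index set of the z_{i,j}, 1 <= i <= j <= n-2 (0-based here: i j : 'I_k). *)
Definition zpairs (k : nat) := {p : 'I_k * 'I_k | (p.1 <= p.2)%N}.

(** Basis of g_n:
    inl (inl None)          = h
    inl (inl (Some true))   = x_+
    inl (inl (Some false))  = x_-
    inl (inr (true, i))     = y_{i+1,+}
    inl (inr (false, i))    = y_{i+1,-}
    inr (exist (i, j) _)    = z_{i+1,j+1}   (i <= j)                      *)
Definition gbasis (k : nat) : finType :=
  ((option bool + (bool * 'I_k)) + zpairs k)%type.

Definition b_h {k} : gbasis k := inl (inl None).
Definition b_x {k} (s : bool) : gbasis k := inl (inl (Some s)).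
Definition b_y {k} (s : bool) (i : 'I_k) : gbasis k := inl (inr (s, i)).

Lemma zswap_proof k (i j : 'I_k) : ~~ (i <= j)%N -> (j <= i)%N.
Proof. by rewrite -ltnNge => /ltnW. Qed.

Definition b_z {k} (i j : 'I_k) : gbasis k :=
  inr (match boolP (i <= j)%N with
       | AltTrue h => exist (fun p : 'I_k * 'I_k => (p.1 <= p.2)%N) (i, j) h
       | AltFalse h => exist (fun p : 'I_k * 'I_k => (p.1 <= p.2)%N) (j, i)
                              (zswap_proof h)
       end).

Notation gn K n := {ffun gbasis (n - 2) -> K} (only parsing).

Definition gvec {K : fieldType} {n} (b : gbasis (n - 2)) : gn K n :=
  [ffun c => (c == b)%:R].

Definition gscale {K : fieldType} {n} (a : K) (u : gn K n) : gn K n :=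
  [ffun c => a * u c].

(** The listed nonzero brackets (one orientation each). *)
Definition gbr0 {K : fieldType} {n} (b c : gbasis (n - 2)) : gn K n :=
  match b, c with
  | inl (inl (Some true)), inl (inl (Some false)) => gvec b_h
      (* [x_+, x_-] = h *)
  | inl (inl None), inl (inl (Some s)) => gscale (if s then 2 else -2) (gvec (b_x s))
      (* [h, x_(+/-)] = +/- 2 x_(+/-) *)
  | inl (inl None), inl (inr (s, i)) => gscale (if s then 1 else -1) (gvec (b_y s i))
      (* [h, y_(i,+/-)] = +/- y_(i,+/-) *)
  | inl (inl (Some false)), inl (inr (true, i)) => gvec (b_y false i)
      (* [x_-, y_(i,+)] = y_(i,-) *)
  | inl (inl (Some true)), inl (inr (false, i)) => gvec (b_y true i)
      (* [x_+, y_(i,-)] = y_(i,+) *)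
  | inl (inr (true, i)), inl (inr (false, j)) => gvec (b_z i j)
      (* [y_(i,+), y_(j,-)] = z_(min(i,j),max(i,j)) *)
  | _, _ => 0
  end.

Definition gbr_basis {K : fieldType} {n} (b c : gbasis (n - 2)) : gn K n :=
  gbr0 b c - gbr0 c b.

Definition gbracket {K : fieldType} {n} (u v : gn K n) : gn K n :=
  \sum_(b : gbasis (n - 2)) \sum_(c : gbasis (n - 2)) gscale (u b * v c) (gbr_basis b c).

(** Matrix unit E_{p,q} in the N x N matrices, with 1-based indices p q. *)
Definition Emx {K : fieldType} (N p q : nat) : 'M[K]_N :=
  \matrix_(i < N, j < N) ((i.+1 == p) && (j.+1 == q))%:R.

(** rho on the basis, with paper indices i' = i + 1. *)
Definition rho_basis {K : fieldType} {n} (b : gbasis (n - 2)) : 'M[K]_(2 * (n - 1)) :=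
  let N := (2 * (n - 1))%N in
  match b with
  | inl (inl None) => Emx N (n - 1) (n - 1) - Emx N n n
  | inl (inl (Some true)) => Emx N (n - 1) n
  | inl (inl (Some false)) => Emx N n (n - 1)
  | inl (inr (true, i)) => Emx N (n - 1) i.+1 + Emx N (n + i.+1) n
  | inl (inr (false, i)) => Emx N n i.+1 - Emx N (n + i.+1) (n - 1)
  | inr (exist (i, j) _) => Emx N (i.+1 + n) j.+1 + Emx N (j.+1 + n) i.+1
  end.

Definition rho {K : fieldType} {n} (u : gn K n) : 'M[K]_(2 * (n - 1)) :=
  \sum_(b : gbasis (n - 2)) u b *: rho_basis b.

Definition faithful_sl_rep (K : fieldType) (n : nat) : Prop :=
  [/\ forall u : gn K n, \tr (rho u) = 0,
      forall u v : gn K n,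
        rho (gbracket u v) = rho u *m rho v - rho v *m rho u
    & injective (@rho K n)].

(* Since rho is linear and the bracket bilinear, the trace and bracket identities
   only have to be checked on basis vectors, where they are a finite computation
   with the rule E_{p,q} E_{r,s} = [q = r] E_{p,s} for matrix units.  For
   faithfulness, every basis vector b has an entry of rho(b) that is nonzero and
   vanishes in rho(b') for all b' <> b, so the rho(b) are linearly independent.
   For z_{i,i} this entry equals 2, which is why the argument needs 2 <> 0. *)

From HB Require Import structures.
From mathcomp Require Import all_boot all_order all_algebra.
From mathcomp Require Import Rstruct complex.
From mathcomp Require Import zify ring.

Set Implicit Arguments.
Unset Strict Implicit.
Unset Printing Implicit Defensive.

Import GRing.Theory Num.Theory.
Local Open Scope ring_scope.

Section MatrixUnits.
Variables (K : fieldType) (N : nat).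

Lemma sum_ord_succ_eq (F : nat -> K) q :
  \sum_(j < N) (j.+1 == q)%:R * F j = if (0 < q <= N)%N then F q.-1 else 0.
Proof.
case: ifP => [/andP[q_gt0 q_leN] | q_out].
  have q_lt : (q.-1 < N)%N by lia.
  rewrite (bigD1 (Ordinal q_lt)) //= prednK // eqxx mul1r big1 ?addr0 // => j.
  move=> /eqP j_neq; case: eqP => [j_eq|]; last by rewrite mul0r.
  by case: j_neq; apply: val_inj => /=; lia.
rewrite big1 // => j _; case: eqP => [j_eq|]; last by rewrite mul0r.
by move: q_out; have := ltn_ord j; lia.
Qed.

Lemma mul_Emx p q r s :
  Emx N p q *m Emx N r s =
  (if (q == r) && (0 < q <= N)%N then Emx N p s else 0) :> 'M[K]_N.
Proof.
apply/matrixP => a b; rewrite !mxE.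
under eq_bigr => j _ do rewrite !mxE -!mulnb !natrM -mulrA mulrCA.
rewrite (sum_ord_succ_eq (fun j => (a.+1 == p)%:R * ((j.+1 == r)%:R * (b.+1 == s)%:R))).
case: (boolP (0 < q <= N)%N) => [/andP[q_gt0 _] | _]; last by rewrite andbF /= !mxE.
rewrite prednK // andbT; case: (q =P r) => _ /=; last by rewrite mxE mul0r mulr0.
by rewrite mul1r mxE -mulnb natrM.
Qed.

Lemma mxtrace_Emx p q :
  \tr (Emx N p q : 'M[K]_N) = if (p == q) && (0 < p <= N)%N then 1 else 0.
Proof.
rewrite /mxtrace; under eq_bigr => j _ do rewrite mxE -mulnb natrM.
rewrite (sum_ord_succ_eq (fun j => (j.+1 == q)%:R)).
case: (boolP (0 < p <= N)%N) => [/andP[p_gt0 _] | _]; last by rewrite andbF.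
by rewrite prednK // andbT; case: (p =P q).
Qed.

End MatrixUnits.

Lemma coef_eq0_of_isolated_entries (R : idomainType) m p (I : finType)
    (M : I -> 'M[R]_(m, p)) (x : I -> R) :
  (forall b, exists a c, M b a c != 0 /\ forall b', M b' a c != 0 -> b' = b) ->
  \sum_b x b *: M b = 0 -> forall b, x b = 0.
Proof.
move=> isolated sum_eq0 b; have [a [c [Mb_neq0 Mb_isolated]]] := isolated b.
have : (\sum_b x b *: M b) a c = x b * M b a c.
  rewrite summxE (bigD1 b) //= big1 ?addr0; first by rewrite mxE.
  move=> b' /eqP b'_neq; rewrite mxE.
  by case: (eqVneq (M b' a c) 0) => [->|/Mb_isolated//]; rewrite mulr0.
by rewrite sum_eq0 mxE => /esym/eqP; rewrite mulf_eq0 (negbTE Mb_neq0) orbF => /eqP.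
Qed.

Section RhoLinear.
Variables (K : fieldType) (n : nat).

Fact rho_is_zmod_morphism : zmod_morphism (@rho K n).
Proof.
move=> u v; rewrite /rho -sumrB; apply: eq_bigr => b _.
by rewrite !ffunE scalerBl.
Qed.

HB.instance Definition _ := GRing.isZmodMorphism.Build _ _ (@rho K n)
  rho_is_zmod_morphism.

Lemma rho_scale a (u : gn K n) : rho (gscale a u) = a *: rho u.
Proof. by rewrite /rho scaler_sumr; apply: eq_bigr => b _; rewrite ffunE scalerA. Qed.

Lemma rho_gvec b : rho (gvec b : gn K n) = rho_basis b.
Proof.
rewrite /rho (bigD1 b) //= big1 ?addr0; first by rewrite ffunE eqxx scale1r.
by move=> c /negbTE c_neq; rewrite ffunE c_neq scale0r.
Qed.

End RhoLinear.

Ltac add_ord_bounds := repeat match goal with i : _ |- _ =>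
  let P := type of (ltn_ord i) in
  lazymatch goal with _ : P |- _ => fail | _ => have := ltn_ord i; move=> ? end end.

Ltac decide_nat_ifs := repeat match goal with |- context [if ?c then _ else _] =>
  let c_val := fresh in
  first [ have c_val : c = true by lia | have c_val : c = false by lia ];
  rewrite c_val; clear c_val end.

Ltac case_nat_eqs := repeat match goal with |- context [?x == ?y] =>
  lazymatch type of x with nat => case: (x =P y) => ? end end.

Ltac subst_ords := repeat match goal with i : ?T, j : ?T |- _ =>
  let _ := constr:(ltn_ord i) in
  assert (i = j) by (apply: ord_inj; lia); subst j end.

Section Representation.
Variables (K : fieldType) (n : nat).
Hypothesis n_ge2 : (2 <= n)%N.
Local Notation N := (2 * (n - 1))%N.

Lemma rho_basis_b_z (i j : 'I_(n - 2)) :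
  rho_basis (b_z i j) = Emx N (n + i.+1) j.+1 + Emx N (n + j.+1) i.+1 :> 'M[K]_N.
Proof. by rewrite /b_z; case: {-}_ / boolP => _ /=; rewrite !(addnC n) // addrC. Qed.

Lemma rho_gbr_basis (b c : gbasis (n - 2)) :
  rho (gbr_basis b c : gn K n) =
  rho_basis b *m rho_basis c - rho_basis c *m rho_basis b.
Proof.
rewrite /gbr_basis raddfB.
case: b => [[[[]|]|[[] i]]|[[i j] ij]]; case: c => [[[[]|]|[[] i']]|[[i' j'] ij']];
  rewrite /= ?raddf0 ?rho_scale ?rho_gvec ?rho_basis_b_z /=
    ?(mulmxDl, mulmxDr, mulmxBl, mulmxBr, mulNmx, mulmxN, mul_Emx);
  add_ord_bounds; decide_nat_ifs; apply/matrixP => a a'; rewrite !mxE; ring.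
Qed.

Lemma rho_gbracket (u v : gn K n) :
  rho (gbracket u v) = rho u *m rho v - rho v *m rho u.
Proof.
have rho_mul (w w' : gn K n) : rho w *m rho w' =
    \sum_b \sum_c (w b * w' c) *: (rho_basis b *m rho_basis c).
  rewrite /rho mulmx_suml; apply: eq_bigr => b _.
  rewrite mulmx_sumr; apply: eq_bigr => c _.
  by rewrite -scalemxAl -scalemxAr scalerA.
rewrite !rho_mul [X in _ - X]exchange_big /gbracket raddf_sum -sumrB.
apply: eq_bigr => b _; rewrite raddf_sum -sumrB; apply: eq_bigr => c _.
by rewrite /= rho_scale rho_gbr_basis scalerBr mulrC.
Qed.

Lemma mxtrace_rho_basis b : \tr (rho_basis b : 'M[K]_N) = 0.
Proof.
case: b => [[[[]|]|[[] i]]|[[i j] ij]];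
  rewrite /= ?raddfD ?raddfN /= ?mxtrace_Emx; add_ord_bounds; decide_nat_ifs;
  by rewrite ?addr0 ?subrr.
Qed.

Lemma mxtrace_rho (u : gn K n) : \tr (rho u) = 0.
Proof.
rewrite /rho raddf_sum big1 // => b _.
by rewrite /= mxtraceZ mxtrace_rho_basis mulr0.
Qed.

Hypothesis two_neq0 : (2 : K) != 0.

(* The entries used, 0-based: (n-2, n-1) for x_+, (n-1, n-2) for x_-, (n-2, n-2)
   for h, (n-2, i) for y_{i,+}, (n-1, i) for y_{i,-} and (n+j, i) for z_{i,j}. *)
Lemma rho_basis_isolated_entry b :
  exists a c, (rho_basis b : 'M[K]_N) a c != 0 /\
              forall b', (rho_basis b' : 'M[K]_N) a c != 0 -> b' = b.
Proof.
have lt_n2 : (n - 2 < N)%N by lia.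
have lt_n1 : (n - 1 < N)%N by lia.
have lt_i (i : 'I_(n - 2)) : (i < N)%N by have := ltn_ord i; lia.
have lt_nj (j : 'I_(n - 2)) : (n + j < N)%N by have := ltn_ord j; lia.
case: b => [[[[]|]|[[] i]]|[[i j] /= ij]];
  [ exists (Ordinal lt_n2), (Ordinal lt_n1) | exists (Ordinal lt_n1), (Ordinal lt_n2)
  | exists (Ordinal lt_n2), (Ordinal lt_n2) | exists (Ordinal lt_n2), (Ordinal (lt_i i))
  | exists (Ordinal lt_n1), (Ordinal (lt_i i))
  | exists (Ordinal (lt_nj j)), (Ordinal (lt_i i)) ];
  (split=> [|b']; last case: b' => [[[[]|]|[[] i']]|[[i' j'] /= ij']]);
  rewrite /= ?mxE /=; add_ord_bounds; case_nat_eqs; try (exfalso; lia);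
  rewrite /= ?(mulr0n, mulr1n, subr0, sub0r, addr0, add0r, oppr_eq0, oner_eq0, eqxx) //.
all: move=> _; subst_ords; by [| congr inr; apply: val_inj].
Qed.

Lemma rho_inj : injective (@rho K n).
Proof.
move=> u v /eqP; rewrite -subr_eq0 -raddfB => /eqP rho_uv_eq0.
apply/ffunP => b; apply/eqP; rewrite -subr_eq0; apply/eqP.
have := coef_eq0_of_isolated_entries rho_basis_isolated_entry rho_uv_eq0 b.
by rewrite !ffunE.
Qed.

End Representation.

Theorem rho_faithful_sl_rep (K : fieldType) n :
  (2 <= n)%N -> (2 : K) != 0 -> faithful_sl_rep K n.
Proof.
move=> n_ge2 two_neq0; split.
- exact: mxtrace_rho.
- exact: rho_gbracket.
- exact: rho_inj.
Qed.

Theorem proposition3p5 (n : nat) (hn : (2 <= n)%N) :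
  faithful_sl_rep Rdefinitions.R n /\ faithful_sl_rep (Rdefinitions.R)[i] n.
Proof. by split; apply: rho_faithful_sl_rep => //; rewrite pnatr_eq0. Qed.
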